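(* Let $X$ be a set and $f=(f_1,\ldots,f_m):X\to\mathbb{R}^m$ a mapping such that $f(X)$ is convex. Then the following are equivalent: $(\alpha)$ $\mathrm{WE}(f,X)=\mathrm{E}(f,X)$; $(\beta)$ $\displaystyle\bigcup_{\emptyset\neq I\subseteq M}\mathrm{E}(f_I,X)\subseteq\mathrm{E}(f,X)$, where $M=\{1,\ldots,m\}$.
   Context: Let $M=\{1,\ldots,m\}$. For a nonempty $I\subseteq M$ and $y,y'\in\mathbb{R}^m$: $y\lneq_I y'$ means $y_i\leq y'_i$ for all $i\in I$ and $y_j<y'_j$ for some $j\in I$; $y<_I y'$ means $y_i<y'_i$ for all $i\in I$. For $Y\subseteq\mathbb{R}^m$, $\mathrm{M}_I Y$ (resp. $\mathrm{WM}_I Y$) is the set of all $y'\in Y$ for which there is no $y\in Y$ with $y\lneq_I y'$ (resp. $y<_I y'$). For $f=(f_1,\ldots,f_m):X\to\mathbb{R}^m$ and $I=\{i_1<\cdots<i_k\}$, $f_I=(f_{i_1},\ldots,f_{i_k})$, and $\mathrm{E}(f_I,X)=f^{-1}(\mathrm{M}_I f(X))$, $\mathrm{WE}(f_I,X)=f^{-1}(\mathrm{WM}_I f(X))$; $\mathrm{E}(f,X)=\mathrm{E}(f_M,X)$, $\mathrm{WE}(f,X)=\mathrm{WE}(f_M,X)$. *)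

From Stdlib Require Import Reals.
From mathcomp Require Import all_boot.
Set Implicit Arguments.
Unset Strict Implicit.

(* points of R^m: coordinates indexed by 'I_m = {0,...,m-1} (stands for M) *)
Definition vec (m : nat) := 'I_m -> R.

Definition leqI (m : nat) (I : {set 'I_m}) (y y' : vec m) : Prop :=
  (forall i, i \in I -> Rle (y i) (y' i)) /\ (exists j, j \in I /\ Rlt (y j) (y' j)).

Definition ltI (m : nat) (I : {set 'I_m}) (y y' : vec m) : Prop :=
  forall i, i \in I -> Rlt (y i) (y' i).

Definition MinI (m : nat) (I : {set 'I_m}) (Y : vec m -> Prop) (y' : vec m) : Prop :=
  Y y' /\ ~ (exists y, Y y /\ leqI I y y').
Definition WMinI (m : nat) (I : {set 'I_m}) (Y : vec m -> Prop) (y' : vec m) : Prop :=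
  Y y' /\ ~ (exists y, Y y /\ ltI I y y').

Definition fimg (X : Type) (m : nat) (f : X -> vec m) : vec m -> Prop :=
  fun y => exists x, f x = y.

Definition EffI (X : Type) (m : nat) (f : X -> vec m) (I : {set 'I_m}) : X -> Prop :=
  fun x => MinI I (fimg f) (f x).
Definition WEffI (X : Type) (m : nat) (f : X -> vec m) (I : {set 'I_m}) : X -> Prop :=
  fun x => WMinI I (fimg f) (f x).

Definition Eff (X : Type) (m : nat) (f : X -> vec m) : X -> Prop := EffI f setT.
Definition WEff (X : Type) (m : nat) (f : X -> vec m) : X -> Prop := WEffI f setT.

Definition convex (m : nat) (Y : vec m -> Prop) : Prop :=
  forall y1 y2, Y y1 -> Y y2 -> forall t : R, Rle 0 t /\ Rle t 1 ->
    Y (fun i => Rplus (Rmult t (y1 i)) (Rmult (Rminus 1 t) (y2 i))).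

(** If [f x] is weakly but not properly minimal, then by (β) no [E(f_I, X)]
    contains [x]: for every nonempty [I] some point of [f(X)] improves [f x]
    weakly on [I] and strictly somewhere in [I].  Starting from [z := f x],
    a short convex step from [z] towards the improving point for
    [I := {i | z_i = (f x)_i}] keeps every coordinate [<= (f x)_i] and makes
    one more coordinate strict; after at most [m] steps we reach a point of
    [f(X)] strictly below [f x] in all coordinates, contradicting weak
    minimality.  The converse only uses that a strict improvement on all of
    [M] is an improvement on every nonempty [I]. *)

From Stdlib Require Import Reals Lra Psatz Classical.
From mathcomp Require Import all_boot.
Local Open Scope R_scope.
Set Implicit Arguments.
Unset Strict Implicit.

Lemma small_pos_uniform (T : finType) (P : T -> R -> Prop) :
  (forall i, exists d, 0 < d /\ forall s, 0 < s <= d -> P i s) ->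
  exists d, 0 < d /\ forall s, 0 < s <= d -> forall i, P i s.
Proof.
move=> HP.
suff [d [d_gt0 Hd]] : exists d, 0 < d /\
    forall s, 0 < s <= d -> forall i, i \in enum T -> P i s.
  by exists d; split=> // s Hs i; apply: Hd; rewrite ?mem_enum.
elim: (enum T) => [|a l [d [d_gt0 Hd]]]; first by exists 1; split=> [|s _ i]; [lra|].
have [da [da_gt0 Hda]] := HP a.
exists (Rmin d da); split; first exact: Rmin_pos.
move=> s [s_gt0 s_le] i; rewrite in_cons => /orP[/eqP -> | Hi].
- by apply: Hda; split=> //; apply: Rle_trans s_le (Rmin_r _ _).
- by apply: Hd => //; split=> //; apply: Rle_trans s_le (Rmin_l _ _).
Qed.

Lemma lt_small_step (a b c : R) :
  a < b -> exists d, 0 < d /\ forall s, 0 < s <= d -> a + s * (c - a) < b.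
Proof.
move=> lt_ab.
have abs_ge0 := Rabs_pos (c - a); have abs_ge := Rle_abs (c - a).
exists ((b - a) / (Rabs (c - a) + 1)); split.
  by apply: Rdiv_lt_0_compat; lra.
move=> s [s_gt0 s_le].
have Hd : (b - a) / (Rabs (c - a) + 1) * (Rabs (c - a) + 1) = b - a.
  by field; lra.
have : s * (Rabs (c - a) + 1) <= b - a.
  by rewrite -Hd; apply: Rmult_le_compat_r; lra.
nra.
Qed.

Section ConvexDescent.

Variables (m : nat) (Y : vec m -> Prop) (y : vec m).
Hypothesis Y_convex : convex Y.
Hypothesis improvable :
  forall J : {set 'I_m}, J != set0 -> exists w, Y w /\ leqI J w y.

Definition tight (z : vec m) : {set 'I_m} := [set i | ~~ Rlt_dec (z i) (y i)].

Lemma tightP (z : vec m) i : reflect (~ z i < y i) (i \in tight z).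
Proof. by rewrite inE; case: Rlt_dec => H; constructor. Qed.

Lemma tight_eq (z : vec m) i : z i <= y i -> i \in tight z -> z i = y i.
Proof. by move=> le_zy /tightP; lra. Qed.

Lemma descent_step (z : vec m) :
  Y z -> (forall i, z i <= y i) -> tight z != set0 ->
  exists v, [/\ Y v, forall i, v i <= y i & tight v \proper tight z].
Proof.
move=> Yz le_zy tight_n0.
have [w [Yw [le_wy [j [j_tight lt_wyj]]]]] := improvable tight_n0.
have [d [d_gt0 Hd]] : exists d, 0 < d /\ forall s, 0 < s <= d ->
    forall i, z i < y i -> z i + s * (w i - z i) < y i.
  apply: small_pos_uniform => i.
  have [lt_zy|ge_zy] := Rlt_dec (z i) (y i).
    by have [d [d_gt0 Hd]] := lt_small_step (w i) lt_zy; exists d; split=> // s /Hd.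
  by exists 1; split=> [|s _ /ge_zy //]; lra.
pose s := Rmin d 1.
have s_gt0 : 0 < s by apply: Rmin_pos; lra.
have s_le1 : s <= 1 := Rmin_r _ _.
have s_led : 0 < s <= d by split=> //; apply: Rmin_l.
have Yv := Y_convex Yz Yw (conj (ltac:(lra) : 0 <= 1 - s) (ltac:(lra) : 1 - s <= 1)).
set v := fun i => _ in Yv.
have vE i : v i = z i + s * (w i - z i) by rewrite /v; ring.
have slack_v i : ~ i \in tight z -> v i < y i.
  move=> not_tight; rewrite vE; apply: Hd => //.
  by apply: NNPP => /tightP.
exists v; split=> //.
- move=> i; have [i_tight|/negP/slack_v] := boolP (i \in tight z); last lra.
  have := le_wy i i_tight; rewrite vE (tight_eq (le_zy i) i_tight); nra.
- apply/properP; split.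
    by apply/subsetP => i; apply: contraLR => /negP/slack_v lt_vy; apply/tightP.
  exists j => //; apply/tightP; rewrite vE (tight_eq (le_zy j) j_tight); nra.
Qed.

Lemma tight0_ltI (z : vec m) : tight z = set0 -> ltI setT z y.
Proof. by move=> tight0 i _; apply: NNPP => /tightP; rewrite tight0 inE. Qed.

Lemma convex_strict_below (z : vec m) :
  Y z -> (forall i, z i <= y i) -> exists v, Y v /\ ltI setT v y.
Proof.
move: {2}#|tight z| (leqnn #|tight z|) => n.
elim: n z => [|n IHn] z le_card Yz le_zy.
  by move: le_card; rewrite leqn0 cards_eq0 => /eqP/tight0_ltI; exists z.
have [/eqP/tight0_ltI lt_zy|tight_n0] := boolP (tight z == set0); first by exists z.
have [v [Yv le_vy lt_tight]] := descent_step Yz le_zy tight_n0.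
by apply: IHn Yv le_vy; rewrite -ltnS (leq_trans (proper_card lt_tight)).
Qed.

End ConvexDescent.

Lemma ltI_leqI (m : nat) (I : {set 'I_m}) (y y' : vec m) :
  I != set0 -> ltI setT y y' -> leqI I y y'.
Proof.
move=> /set0Pn[j j_in] lt_yy'.
split; last by exists j; split=> //; apply: lt_yy'; rewrite inE.
by move=> i _; left; apply: lt_yy'; rewrite inE.
Qed.

Section Efficiency.

Variables (X : Type) (m : nat) (f : X -> vec m).

Lemma EffI_WEff (I : {set 'I_m}) x : I != set0 -> EffI f I x -> WEff f x.
Proof.
move=> I_n0 [fx_img not_leq]; split=> // [[y [y_img lt_y]]].
by apply: not_leq; exists y; split=> //; apply: ltI_leqI.
Qed.

Lemma Eff_WEff x : (0 < m)%N -> Eff f x -> WEff f x.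
Proof. by move=> m_gt0; apply: EffI_WEff; apply/set0Pn; exists (Ordinal m_gt0). Qed.

Lemma not_EffI (I : {set 'I_m}) x :
  ~ EffI f I x -> exists y, fimg f y /\ leqI I y (f x).
Proof.
move=> not_eff; apply: NNPP => no_leq; apply: not_eff.
by split=> //; exists x.
Qed.

Lemma WEff_Eff_convex x :
  convex (fimg f) ->
  (forall I : {set 'I_m}, I != set0 -> EffI f I x -> Eff f x) ->
  WEff f x -> Eff f x.
Proof.
move=> f_convex HE [fx_img not_lt]; apply: NNPP => not_eff.
have improvable J : J != set0 -> exists w, fimg f w /\ leqI J w (f x).
  by move=> J_n0; apply: not_EffI => /(HE J J_n0).
have [v [v_img lt_v]] :=
  convex_strict_below f_convex improvable fx_img (fun i => Rle_refl _).
by apply: not_lt; exists v.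
Qed.

End Efficiency.

Theorem corollary6p1 (X : Type) (m : nat) (hm : (0 < m)%N)
  (f : X -> vec m) (hconv : convex (fimg f)) :
  (forall x, WEff f x <-> Eff f x)
  <->
  (forall x, (exists I : {set 'I_m}, I != set0 /\ EffI f I x) -> Eff f x).
Proof.
split=> [WE_E x [I [I_n0 effI]] | HE x].
  by apply/WE_E; apply: EffI_WEff effI.
split; last exact: Eff_WEff.
by apply: WEff_Eff_convex => // I I_n0 effI; apply: HE; exists I.
Qed.
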